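(* Let $G$ be a finite group and let $\underline{\mathcal{F}}$ be an indexing system for $G$. Let $\mathbf{O}(\underline{\mathcal{F}})$ be the set of exponents whose $H$-th set consists of the nontrivial orbits $H/K\in\underline{\mathcal{F}}$ (i.e. $K\subsetneq H$), each with some chosen ordering. Then the class of admissible sets of the operad $\mathcal{SM}_{\mathbf{O}(\underline{\mathcal{F}})}$ is $\underline{\mathcal{F}}$.
   Context: A set of exponents $\mathcal{N}=(\mathcal{N}(H))_{H\subseteq G}$: for each subgroup $H$ a set of finite $H$-sets $T$ with chosen orderings $\{1,\dots,|T|\}\cong T$; $\sigma:H\to\Sigma_{|T|}$ the permutation representation and $\Gamma_T=\{(h,\sigma(h))\}\subseteq G\times\Sigma_{|T|}$. With $\mathbb{F}$ the free operad functor on symmetric sequences of $G$-sets and $\widetilde{X}$ the chaotic category on a set $X$ (one morphism between any two objects, applied levelwise), $\mathcal{SM}_{\mathcal{N}}=\widetilde{\mathbb{F}(S_{\mathcal{N}})}$ where $S_{\mathcal{N}}=(G\times\Sigma_0)/\Gamma_\varnothing\sqcup(G\times\Sigma_2)/\Gamma_{**}\sqcup\coprod_{T\in\mathcal{N}}(G\times\Sigma_{|T|})/\Gamma_T$ ($\varnothing$, $**$ trivial). A finite $H$-set $T$ with $|T|=n$ is admissible for an operad $\mathscr{O}$ in $G$-categories if $\mathscr{O}(n)^{\Gamma_T}\neq\varnothing$. An indexing system (Blumberg–Hill) is a family of finite $H$-sets for all $H\subseteq G$ containing trivial actions, closed under isomorphism, restriction, conjugation, subobjects, finite coproducts and products,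 and self-induction. *)

From HB Require Import structures.
From mathcomp Require Import all_boot all_fingroup.

Set Implicit Arguments.
Unset Strict Implicit.
Unset Printing Implicit Defensive.

Local Open Scope group_scope.

(* Conventions.  The finite group G is the whole finGroupType gT; subgroups  *)
(* H are {group gT}.  A finite H-set T with a chosen ordering                *)
(* {1..|T|} ~ T is encoded as (n, f) with f : gT -> {perm 'I_n} a group      *)
(* morphism on H ([morphic H f]); f is the permutation representation        *)
(* sigma : H -> Sigma_n (mathcomp permutations act on the right, so this is  *)
(* a right H-action i ^ h = f h i).  Gamma_T = {(h, f h) | h in H}.          *)


Definition hequiv (gT : finGroupType) (H : {set gT}) (n m : nat)
  (f : gT -> {perm 'I_n}) (f' : gT -> {perm 'I_m}) (e : 'I_n -> 'I_m) : Prop :=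
  forall h i, h \in H -> e (f h i) = f' h (e i).

(* (n, f) is the orbit H/K (right cosets K x, H acting by right
   multiplication) equipped with an ordering e : 'I_n -> H/K *)
Definition is_orbit_ordering (gT : finGroupType) (H K : {group gT}) (n : nat)
  (f : gT -> {perm 'I_n}) : Prop :=
  morphic H f /\
  exists e : 'I_n -> {set gT},
    [/\ injective e,
        (forall i, e i \in rcosets K H),
        (forall C, C \in rcosets K H -> exists i, e i = C) &
        (forall h i, h \in H -> e (f h i) = e i :* h)].

Definition hfamily (gT : finGroupType) :=
  forall (H : {group gT}) (n : nat), (gT -> {perm 'I_n}) -> Prop.

Definition orbit_in (gT : finGroupType) (F : hfamily gT) (H K : {group gT}) :=
  exists n (f : gT -> {perm 'I_n}), is_orbit_ordering H K f /\ F H n f.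

Record indexing_system (gT : finGroupType) (F : hfamily gT) : Prop := {
  is_hset : forall (H : {group gT}) n (f : gT -> {perm 'I_n}), F H n f -> morphic H f;
  is_trivial : forall (H : {group gT}) n, F H n (fun _ => 1);
  is_iso : forall (H : {group gT}) n m (f : gT -> {perm 'I_n})
      (f' : gT -> {perm 'I_m}) (e : 'I_n -> 'I_m),
      morphic H f' -> bijective e -> hequiv H f f' e -> F H n f -> F H m f';
  is_res : forall (H K : {group gT}) n (f : gT -> {perm 'I_n}), K \subset H -> F H n f -> F K n f;
  is_conj : forall (H : {group gT}) n (f : gT -> {perm 'I_n}) (g : gT),
      F H n f -> F (H :^ g)%G n (fun x => f (g * x * g^-1));
  is_sub : forall (H : {group gT}) n m (f : gT -> {perm 'I_n})
      (f' : gT -> {perm 'I_m}) (e : 'I_m -> 'I_n),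
      morphic H f' -> injective e -> hequiv H f' f e -> F H n f -> F H m f';
  is_coprod : forall (H : {group gT}) n m p (f1 : gT -> {perm 'I_n})
      (f2 : gT -> {perm 'I_m}) (g : gT -> {perm 'I_p})
      (e1 : 'I_n -> 'I_p) (e2 : 'I_m -> 'I_p),
      morphic H g -> injective e1 -> injective e2 ->
      (forall i j, e1 i <> e2 j) ->
      (forall k, (exists i, e1 i = k) \/ (exists j, e2 j = k)) ->
      hequiv H f1 g e1 -> hequiv H f2 g e2 ->
      F H n f1 -> F H m f2 -> F H p g;
  is_prod : forall (H : {group gT}) n m p (f1 : gT -> {perm 'I_n})
      (f2 : gT -> {perm 'I_m}) (g : gT -> {perm 'I_p}) (e : 'I_p -> 'I_n * 'I_m),
      morphic H g -> bijective e ->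
      (forall h k, h \in H -> e (g h k) = (f1 h (e k).1, f2 h (e k).2)) ->
      F H n f1 -> F H m f2 -> F H p g;
  (* self-induction: (p, g) is T x_K H via the K-map j : T -> (p, g) *)
  is_ind : forall (H K : {group gT}) m (f : gT -> {perm 'I_m}) p
      (g : gT -> {perm 'I_p}) (j : 'I_m -> 'I_p),
      K \subset H -> orbit_in F H K -> F K m f -> morphic H g ->
      hequiv K f g j ->
      (forall x, exists t h, h \in H /\ x = g h (j t)) ->
      (forall t t' h h', h \in H -> h' \in H -> g h (j t) = g h' (j t') ->
         exists2 k, k \in K & t = f k t' /\ h' = k * h) ->
      F H p g
}.

(* Free operad on a symmetric sequence of G-sets which is a coproduct of     *)
(* orbits (G x Sigma_{ar i}) / Gam i, i : I.  Elements of F(S)(n): trees     *)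
(* whose vertices are labelled by generators (coset representatives         *)
(* (g, p)), with leaves labelled by 'I_n (bijectively), modulo the coset     *)
(* relation and the Sigma-equivariance relation at each vertex.              *)

Inductive tree (gT : finGroupType) (I : Type) (ar : I -> nat) (n : nat) : Type :=
| Leaf : 'I_n -> tree gT ar n
| Node : forall i : I, gT -> {perm 'I_(ar i)} ->
           ('I_(ar i) -> tree gT ar n) -> tree gT ar n.

Arguments Leaf {gT I ar n}.
Arguments Node {gT I ar n}.

Fixpoint leaves (gT : finGroupType) (I : Type) (ar : I -> nat) (n : nat)
  (t : tree gT ar n) : seq 'I_n :=
  match t with
  | Leaf j => [:: j]
  | Node i _ _ ts => flatten [seq leaves (ts j) | j <- enum 'I_(ar i)]
  end.

Definition wf_tree (gT : finGroupType) (I : Type) (ar : I -> nat) (n : nat)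
  (t : tree gT ar n) : Prop := perm_eq (leaves t) (enum 'I_n).

Inductive teq (gT : finGroupType) (I : Type) (ar : I -> nat)
  (Gam : forall i, {set gT * {perm 'I_(ar i)}}) (n : nat) :
  tree gT ar n -> tree gT ar n -> Prop :=
| teq_refl t : teq Gam t t
| teq_sym t u : teq Gam t u -> teq Gam u t
| teq_trans t u v : teq Gam t u -> teq Gam u v -> teq Gam t v
| teq_cong i g p ts us : (forall j, teq Gam (ts j) (us j)) ->
    teq Gam (Node i g p ts) (Node i g p us)
| teq_coset i g p ts c : c \in Gam i ->
    teq Gam (Node i g p ts) (Node i (g * c.1) (p * c.2) ts)
| teq_sigma i g p q ts :
    teq Gam (Node i g (q * p) ts) (Node i g p (fun j => ts (q^-1 j))).

(* (right) action of G x Sigma_n on trees *)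
Fixpoint tact (gT : finGroupType) (I : Type) (ar : I -> nat) (n : nat)
  (g : gT) (q : {perm 'I_n}) (t : tree gT ar n) : tree gT ar n :=
  match t with
  | Leaf j => Leaf (q j)
  | Node i a p ts => Node i (g^-1 * a) p (fun j => tact g q (ts j))
  end.

(* T = (n, f) admissible for the chaotic operad on the free operad:
   the fixed-point category of Gamma_T is nonempty, i.e. some object
   (element of F(S)(n)) is Gamma_T-fixed. *)
Definition admissible_free (gT : finGroupType) (I : Type) (ar : I -> nat)
  (Gam : forall i, {set gT * {perm 'I_(ar i)}})
  (H : {group gT}) (n : nat) (f : gT -> {perm 'I_n}) : Prop :=
  exists t : tree gT ar n,
    wf_tree t /\ forall h, h \in H -> teq Gam (tact h (f h) t) t.

Inductive gen (gT : finGroupType) : Type :=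
| GNull | GMul | GExp of {group gT} & {group gT}.

Arguments GNull {gT}.
Arguments GMul {gT}.

(* chosen orderings: O H K = (n, f) ordering of H/K *)
Definition orderings (gT : finGroupType) :=
  {group gT} -> {group gT} -> {n : nat & gT -> {perm 'I_n}}.

Definition gen_ok (gT : finGroupType) (F : hfamily gT) (x : gen gT) : Prop :=
  match x with
  | GExp H K => K \proper H /\ orbit_in F H K
  | _ => True
  end.

Definition ar_gen (gT : finGroupType) (O : orderings gT) (x : gen gT) : nat :=
  match x with
  | GNull => 0
  | GMul => 2
  | GExp H K => projT1 (O H K)
  end.

Definition Gam_gen (gT : finGroupType) (O : orderings gT) (x : gen gT) :
  {set gT * {perm 'I_(ar_gen O x)}} :=
  match x as x return {set gT * {perm 'I_(ar_gen O x)}} with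
  | GNull => [set (g, 1) | g : gT]
  | GMul => [set (g, 1) | g : gT]
  | GExp H K => [set (h, projT2 (O H K) h) | h in H]
  end.

Definition genON (gT : finGroupType) (F : hfamily gT) :=
  {x : gen gT | gen_ok F x}.

Definition arON (gT : finGroupType) (F : hfamily gT) (O : orderings gT)
  (i : genON F) : nat := ar_gen O (proj1_sig i).

Definition GamON (gT : finGroupType) (F : hfamily gT) (O : orderings gT)
  (i : genON F) : {set gT * {perm 'I_(arON O i)}} := Gam_gen O (proj1_sig i).

(* admissibility for SM_{O(F)} = chaotic (F(S_{O(F)})) *)
Definition admissible_SM (gT : finGroupType) (F : hfamily gT) (O : orderings gT)
  (H : {group gT}) (n : nat) (f : gT -> {perm 'I_n}) : Prop :=
  @admissible_free gT (genON F) (arON O) (GamON O) H n f.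

From HB Require Import structures.
From mathcomp Require Import all_boot all_fingroup.
From Stdlib Require Import Eqdep.

Set Implicit Arguments.
Unset Strict Implicit.
Unset Printing Implicit Defensive.

Local Open Scope group_scope.

(* Admissibility of T means that some tree of the free operad is fixed by Gamma_T
   modulo the relations.  If T is in F, split it into orbits H/K; each lies in F
   (subobjects), so it is either a fixed point, i.e. a leaf, or the leaf set of
   the generator attached to H/K; the orbits are then joined by the binary
   generator, the empty set being the nullary one.  Conversely, the relations
   only change the label of a node by an element of its isotropy group and
   permute its children accordingly.  So if t is fixed, H acts on the children
   of the root through a conjugate of an orbit H'/K' of F, restricted to H,
   i.e. through a member of F(H).  By induction on t the leaves of each child
   form a member of F for its stabiliser; self-induction gives the leaves below
   each orbit of children, and coproducts give all the leaves of t. *)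

Definition perm_or1 (T : finType) (g : T -> T) : {perm T} :=
  if injectiveP g is ReflectT g_inj then perm g_inj else 1.

Lemma perm_or1E (T : finType) (g : T -> T) : injective g -> perm_or1 g =1 g.
Proof. by rewrite /perm_or1; case: injectiveP => // g_inj _ x; rewrite permE. Qed.

Section Restriction.
Variables (gT : finGroupType) (n : nat) (f : gT -> {perm 'I_n}).

Definition stable (K : {set gT}) (A : {set 'I_n}) :=
  forall h x, h \in K -> x \in A -> f h x \in A.

Lemma stableT (K : {set gT}) : stable K setT.
Proof. by move=> *; rewrite in_setT. Qed.

Definition emb (A : {set 'I_n}) : 'I_#|A| -> 'I_n := enum_val.
Arguments emb : clear implicits.

Lemma embP (A : {set 'I_n}) i : emb A i \in A. Proof. exact: enum_valP. Qed.

Lemma emb_inj (A : {set 'I_n}) : injective (emb A). Proof. exact: enum_val_inj. Qed.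

Lemma emb_onto (A : {set 'I_n}) x : x \in A -> exists i, emb A i = x.
Proof. by move=> xA; exists (enum_rank_in xA x); rewrite /emb enum_rankK_in. Qed.

(* If [h] does not map [A] into itself, the map below need not be injective and
   [restr] then takes the junk value 1. *)
Definition restr (A : {set 'I_n}) (h : gT) : {perm 'I_#|A|} :=
  perm_or1 (fun i => enum_rank_in (embP i) (f h (emb A i))).

Lemma restrE (K : {set gT}) (A : {set 'I_n}) h :
  stable K A -> h \in K -> forall i, emb A (restr A h i) = f h (emb A i).
Proof.
move=> sA hK i.
have embK j : emb A (enum_rank_in (embP j) (f h (emb A j))) = f h (emb A j).
  by rewrite /emb enum_rankK_in // sA // embP.
rewrite perm_or1E ?embK // => i1 i2 /(congr1 (emb A)); rewrite !embK.
by move/perm_inj/emb_inj.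
Qed.

Lemma restr_morphic (K : {group gT}) (A : {set 'I_n}) :
  morphic K f -> stable K A -> morphic K (restr A).
Proof.
move=> /morphicP fM sA; apply/morphicP => x y xK yK; apply/permP => i.
apply: emb_inj; rewrite permM !(restrE sA) ?groupM //.
by rewrite fM // permM.
Qed.

End Restriction.

Arguments emb {n} A.
Arguments stableT {gT n} f K.

Section Orbits.
Variables (gT : finGroupType) (n : nat) (f : gT -> {perm 'I_n}) (K : {group gT}).
Hypothesis fM : morphic K f.

Lemma fmorph1 : f 1 = 1. Proof. exact: (morph1 (morphm_morphism fM)). Qed.

Lemma fmorphM h k : h \in K -> k \in K -> f (h * k) = f h * f k.
Proof. exact: (morphicP fM). Qed.

Lemma fmorphV h : h \in K -> f h^-1 = (f h)^-1.
Proof. by move=> hK; apply: (mulgI (f h)); rewrite -fmorphM ?groupV // !mulgV fmorph1. Qed.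

Lemma fmorphVK h x : h \in K -> f h^-1 (f h x) = x.
Proof. by move=> hK; rewrite fmorphV // permK. Qed.

Lemma morphic_sub (K' : {group gT}) : K' \subset K -> morphic K' f.
Proof. by move=> sK; apply/morphicP => x y xK yK; apply: fmorphM; apply: (subsetP sK). Qed.

Definition orb (x : 'I_n) := [set f h x | h in K].

Definition stab (x : 'I_n) : {group gT} := <<[set h in K | f h x == x]>>%G.

Lemma mem_stab x h : (h \in stab x) = (h \in K) && (f h x == x).
Proof.
suff stab_group : group_set [set h in K | f h x == x].
  by rewrite /stab /= gen_set_id // inE.
apply/group_setP; split=> [|a b]; first by rewrite inE group1 fmorph1 perm1 /=.
rewrite !inE => /andP[aK /eqP ax] /andP[bK /eqP bx].
by rewrite groupM // fmorphM // permM ax bx eqxx.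
Qed.

Lemma stab_sub x : stab x \subset K.
Proof. by apply/subsetP => h; rewrite mem_stab => /andP[]. Qed.

Lemma stab_rcoset x y : y \in K -> [set k in K | f k x == f y x] = stab x :* y.
Proof.
move=> yK; apply/setP => k; rewrite mem_rcoset mem_stab !inE groupMr ?groupV //.
case kK: (k \in K) => //=.
rewrite fmorphM ?groupV // permM; apply/eqP/eqP => [-> | e]; first exact: fmorphVK.
by apply: (@perm_inj _ (f y^-1)); rewrite e fmorphVK.
Qed.

Lemma orb_refl x : x \in orb x.
Proof. by apply/imsetP; exists 1; rewrite ?group1 // fmorph1 perm1. Qed.

Lemma orb_stable x : stable f K (orb x).
Proof.
move=> h y hK /imsetP[k kK ->]; apply/imsetP; exists (k * h); first by rewrite groupM.
by rewrite fmorphM // permM.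
Qed.

Lemma orb_sub (A : {set 'I_n}) x : stable f K A -> x \in A -> orb x \subset A.
Proof. by move=> sA xA; apply/subsetP => y /imsetP[k kK ->]; apply: sA. Qed.

Lemma stable_setD (A B : {set 'I_n}) : stable f K A -> stable f K B -> stable f K (A :\: B).
Proof.
move=> sA sB h y hK; rewrite !inE => /andP[yB yA]; rewrite sA // andbT.
by apply: contra yB => fyB; rewrite -(fmorphVK y hK) sB ?groupV.
Qed.

Lemma stable_set_ind (P : {set 'I_n} -> Prop) :
    P set0 ->
    (forall A x, stable f K A -> x \in A -> P (A :\: orb x) -> P A) ->
  forall A, stable f K A -> P A.
Proof.
move=> P0 Porb A; move: {2}#|A|.+1 (ltnSn #|A|) => N.
elim: N A => // N IHN A ltAN sA; have [-> // | [x xA]] := set_0Vmem A.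
apply: (Porb _ x sA xA); apply: IHN (stable_setD sA (@orb_stable x)).
rewrite -ltnS; apply: leq_trans ltAN; rewrite ltnS; apply: proper_card.
apply/properP; split; first exact: subsetDl.
by exists x; rewrite // inE orb_refl.
Qed.

End Orbits.

Section FamilyOnSubsets.
Variables (gT : finGroupType) (F : hfamily gT).
Hypothesis IS : indexing_system F.
Variables (n : nat) (f : gT -> {perm 'I_n}).

Definition F_on (K : {group gT}) (A : {set 'I_n}) := @F K #|A| (restr f A).

Definition incl (A B : {set 'I_n}) (sBA : B \subset A) (i : 'I_#|B|) : 'I_#|A| :=
  enum_rank_in (subsetP sBA _ (embP i)) (emb B i).

Lemma inclE (A B : {set 'I_n}) (sBA : B \subset A) i : emb A (incl sBA i) = emb B i.
Proof. by rewrite /emb enum_rankK_in // (subsetP sBA _ (embP i)). Qed.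

Lemma incl_inj (A B : {set 'I_n}) (sBA : B \subset A) : injective (incl sBA).
Proof. by move=> i j /(congr1 (emb A)); rewrite !inclE => /emb_inj. Qed.

Lemma incl_equiv (K : {set gT}) (A B : {set 'I_n}) (sBA : B \subset A) :
  stable f K A -> stable f K B -> hequiv K (restr f B) (restr f A) (incl sBA).
Proof.
by move=> sA sB h i hK; apply: emb_inj; rewrite inclE (restrE sA) // (restrE sB) // inclE.
Qed.

Section FixedGroup.
Variable K : {group gT}.
Hypothesis fM : morphic K f.

Lemma F_on_sub (A B : {set 'I_n}) :
  stable f K A -> stable f K B -> B \subset A -> F_on K A -> F_on K B.
Proof.
move=> sA sB sBA; apply: (is_sub IS (e := incl sBA)).
- exact: restr_morphic.
- exact: incl_inj.
- exact: incl_equiv.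
Qed.

Lemma F_onT : F_on K setT <-> @F K n f.
Proof.
have emb_setT i : emb setT (enum_rank_in (in_setT i) i) = i.
  by rewrite /emb enum_rankK_in ?in_setT.
have sT := stableT f K.
split=> FK.
- apply: (is_sub IS (e := fun i => enum_rank_in (in_setT i) i) fM _ _ FK).
    by move=> i j /(congr1 (emb setT)); rewrite !emb_setT.
  by move=> h i hK; apply: emb_inj; rewrite (restrE sT) // !emb_setT.
- apply: (is_sub IS (e := emb setT) _ _ _ FK).
  + exact: restr_morphic sT.
  + exact: emb_inj.
  + by move=> h i hK; rewrite (restrE sT).
Qed.

Lemma F_on0 : F_on K set0.
Proof.
have no_elt (i : 'I_#|@set0 'I_n|) : False by have := embP i; rewrite in_set0.
apply: (is_sub IS (e := fun i => False_rect _ (no_elt i)) _ _ _ (is_trivial IS K 0)).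
- by apply: restr_morphic => // h x _; rewrite in_set0.
- by move=> i; case: (no_elt i).
- by move=> h i; case: (no_elt i).
Qed.

Lemma F_on1 x : (forall h, h \in K -> f h x = x) -> F_on K [set x].
Proof.
move=> fx; have sx : stable f K [set x] by move=> h y hK /set1P ->; rewrite fx ?set11.
apply: (is_sub IS (e := fun _ => ord0) _ _ _ (is_trivial IS K 1)).
- exact: restr_morphic.
- by move=> i j _; apply: emb_inj; rewrite (set1P (embP i)) (set1P (embP j)).
- by move=> h i hK; rewrite perm1.
Qed.

Lemma F_onU (A B : {set 'I_n}) : stable f K A -> stable f K B -> [disjoint A & B] ->
  F_on K A -> F_on K B -> F_on K (A :|: B).
Proof.
move=> sA sB dAB FA FB; have sAU := subsetUl A B; have sBU := subsetUr A B.
have sU : stable f K (A :|: B).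
  by move=> h x hK /setUP[xA | xB]; apply/setUP; [left; apply: sA | right; apply: sB].
apply: (is_coprod IS (e1 := incl sAU) (e2 := incl sBU) _ _ _ _ _ _ _ FA FB).
- exact: restr_morphic.
- exact: incl_inj.
- exact: incl_inj.
- move=> i j /(congr1 (emb _)); rewrite !inclE => eij.
  by move: (disjointFr dAB (embP i)); rewrite eij embP.
- move=> k; case/setUP: (embP k) => /emb_onto[i ei]; [left | right];
    by exists i; apply: emb_inj; rewrite inclE.
- exact: incl_equiv.
- exact: incl_equiv.
Qed.

Lemma F_on_ind (K' : {group gT}) (A B : {set 'I_n}) :
    K' \subset K -> orbit_in F K K' ->
    stable f K A -> stable f K' B -> B \subset A -> F_on K' B ->
    (forall y, y \in A -> exists h b, [/\ h \in K, b \in B & y = f h b]) ->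
    (forall h h' b b', h \in K -> h' \in K -> b \in B -> b' \in B ->
       f h b = f h' b' -> exists2 k, k \in K' & b = f k b' /\ h' = k * h) ->
  F_on K A.
Proof.
move=> sK'K oK' sA sB sBA FB cover uniq_cover.
have sA' : stable f K' A by move=> h x hK'; apply: sA; apply: (subsetP sK'K).
apply: (is_ind IS (j := incl sBA) sK'K oK' FB).
- exact: restr_morphic.
- exact: incl_equiv.
- move=> x; have [h [b [hK bB ex]]] := cover _ (embP x); have [t et] := emb_onto bB.
  by exists t, h; split=> //; apply: emb_inj; rewrite (restrE sA) // inclE et.
- move=> t t' h h' hK h'K /(congr1 (emb A)); rewrite !(restrE sA) // !inclE.
  case/(uniq_cover _ _ _ _ hK h'K (embP t) (embP t')) => k kK' [et eh].
  by exists k => //; split=> //; apply: emb_inj; rewrite et (restrE sB).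
Qed.

Lemma orbit_in_stab (A : {set 'I_n}) x :
  stable f K A -> x \in A -> F_on K A -> orbit_in F K (stab f K x).
Proof.
move=> sA xA FA; have sOx := orb_stable fM (x := x).
exists #|orb f K x|, (restr f (orb f K x)); split; last exact: F_on_sub (orb_sub sA xA) FA.
split; first exact: restr_morphic.
exists (fun i => [set k in K | f k x == emb _ i]); split.
- move=> i j eij; apply: emb_inj.
  have /imsetP[k kK eki] := embP i.
  have : k \in [set k in K | f k x == emb _ i] by rewrite inE kK eki eqxx.
  by rewrite eij inE => /andP[_ /eqP <-].
- move=> i; have /imsetP[k kK ->] := embP i.
  by rewrite (stab_rcoset fM) //; apply/rcosetsP; exists k.
- move=> C /rcosetsP[y yK ->]; have /emb_onto[i ei] : f y x \in orb f K x by apply: imset_f.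
  by exists i; rewrite ei (stab_rcoset fM).
- move=> h i hK; rewrite (restrE sOx) //; have /imsetP[k kK ->] := embP i.
  by rewrite -permM -(fmorphM fM) // !(stab_rcoset fM) ?groupM // rcosetM.
Qed.

End FixedGroup.
End FamilyOnSubsets.

Lemma perm_map_enum_perm k (s : {perm 'I_k}) : perm_eq (map s (enum 'I_k)) (enum 'I_k).
Proof.
apply: uniq_perm; rewrite ?(map_inj_uniq perm_inj) ?enum_uniq //.
by move=> j; rewrite mem_enum; apply/mapP; exists (s^-1 j); rewrite ?mem_enum ?permKV.
Qed.

Lemma perm_flatten_reindex (T : eqType) k (G : 'I_k -> seq T) (s : {perm 'I_k}) :
  perm_eq (flatten [seq G (s j) | j <- enum 'I_k]) (flatten [seq G j | j <- enum 'I_k]).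
Proof. by rewrite (map_comp G s); apply/perm_flatten/perm_map/perm_map_enum_perm. Qed.

Lemma uniq_flatten_map_in (S T : eqType) (G : S -> seq T) s i :
  uniq (flatten (map G s)) -> i \in s -> uniq (G i).
Proof.
elim: s => //= a s IHs; rewrite cat_uniq in_cons => /and3P[uGa _ us].
by case/predU1P => [-> | /IHs]; last exact.
Qed.

Lemma uniq_flatten_map_disjoint (S T : eqType) (G : S -> seq T) s i j y :
  uniq s -> uniq (flatten (map G s)) -> i \in s -> j \in s -> i != j ->
  y \in G i -> y \notin G j.
Proof.
elim: s => //= a s IHs /andP[_ us]; rewrite cat_uniq => /and3P[_ /hasPn Ga_s uGs].
rewrite !in_cons => /predU1P[-> | is_] /predU1P[-> | js] //; first by rewrite eqxx.
- by move=> _ yGa; apply: contraL yGa => yGj; apply: Ga_s; apply/flatten_mapP; exists j.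
- by move=> _ yGi; apply: Ga_s; apply/flatten_mapP; exists i.
- exact: IHs.
Qed.

Section TreeSimilarity.
Variables (gT : finGroupType) (I : Type) (ar : I -> nat).
Variables (Gam : forall i, {set gT * {perm 'I_(ar i)}}) (n : nat).

Local Notation tree := (tree gT ar n).

Lemma leaves_tact g q (t : tree) : leaves (tact g q t) = map q (leaves t).
Proof.
elim: t => [j | i a p ts IHts] //=.
by rewrite map_flatten -map_comp; congr flatten; apply: eq_map => j /=; rewrite IHts.
Qed.

Definition leafset (t : tree) := [set y in leaves t].

Lemma wf_tree_leafset (t : tree) : wf_tree t -> leafset t = [set: 'I_n].
Proof. by move=> wf; apply/setP => y; rewrite !inE (perm_mem wf) mem_enum. Qed.

Lemma leafset_tact g q (t : tree) : leafset (tact g q t) = q @: leafset t.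
Proof.
apply/setP => y; rewrite inE leaves_tact.
by apply/mapP/imsetP => -[z zt ->]; exists z; rewrite ?inE in zt *.
Qed.

Lemma leafset_Node i g p (ts : 'I_(ar i) -> tree) (s : {perm 'I_(ar i)}) :
  leafset (Node i g p ts) = \bigcup_j leafset (ts (s j)).
Proof.
apply/setP => y; rewrite inE; apply/flatten_mapP/bigcupP => [[j _ yj] | [j _]].
  by exists (s^-1 j); rewrite ?inE ?permKV.
by rewrite inE => yj; exists (s j); rewrite ?mem_enum.
Qed.

Lemma uniq_leaves_child i g p (ts : 'I_(ar i) -> tree) j :
  uniq (leaves (Node i g p ts)) -> uniq (leaves (ts j)).
Proof. by move/uniq_flatten_map_in; apply; rewrite mem_enum. Qed.

Lemma leafset_children_disjoint i g p (ts : 'I_(ar i) -> tree) j j' :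
  uniq (leaves (Node i g p ts)) -> j != j' -> [disjoint leafset (ts j) & leafset (ts j')].
Proof.
move=> uniq_t ne_jj'; rewrite disjoint_subset; apply/subsetP => y; rewrite !inE.
by apply: (uniq_flatten_map_disjoint (enum_uniq _) uniq_t); rewrite ?mem_enum.
Qed.

Lemma teq_tact_node i h q (c : {perm 'I_(ar i)}) (ts : 'I_(ar i) -> tree) :
    (h, c) \in Gam i -> (forall j, teq Gam (tact h q (ts j)) (ts (c j))) ->
  teq Gam (tact h q (Node i 1 1 ts)) (Node i 1 1 ts).
Proof.
move=> hcG tsc /=; apply: teq_trans (teq_coset _ _ _ hcG) _ => /=.
rewrite mulg1 mulVg mul1g -[c]mulg1; apply: teq_trans (teq_sigma _ _ _ _ _) _.
by apply: teq_cong => j; have := tsc (c^-1 j); rewrite permKV.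
Qed.

Hypothesis Gam1 : forall i, (1, 1) \in Gam i.
Hypothesis GamV : forall i c, c \in Gam i -> (c.1^-1, c.2^-1) \in Gam i.
Hypothesis GamM : forall i c d, c \in Gam i -> d \in Gam i -> (c.1 * d.1, c.2 * d.2) \in Gam i.

(* When every [Gam i] is a subgroup, [tsim] describes the classes of [teq Gam]
   directly: equal shapes, the labels of corresponding nodes differing by some
   [c] in [Gam i], and the children matched along [c.2]. *)
Inductive tsim : tree -> tree -> Prop :=
| tsim_Leaf j : tsim (Leaf j) (Leaf j)
| tsim_Node i g (p p' : {perm 'I_(ar i)}) (ts us : 'I_(ar i) -> tree) c : c \in Gam i ->
    (forall j, tsim (ts (p^-1 j)) (us (p'^-1 (c.2 j)))) ->
    tsim (Node i g p ts) (Node i (g * c.1) p' us).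

Arguments tsim_Node {i g p p' ts us} c.

Lemma tsim_inv t u : tsim t u ->
  match t with
  | Leaf j => u = Leaf j
  | Node i g p ts => exists2 c, c \in Gam i & exists p' us,
      u = Node i (g * c.1) p' us /\ forall j, tsim (ts (p^-1 j)) (us (p'^-1 (c.2 j)))
  end.
Proof. by case=> // i g p p' ts us c cG sim; exists c => //; exists p', us. Qed.

Lemma tsim_Node1 i g (p p' : {perm 'I_(ar i)}) (ts us : 'I_(ar i) -> tree) :
  (forall j, tsim (ts (p^-1 j)) (us (p'^-1 j))) -> tsim (Node i g p ts) (Node i g p' us).
Proof.
move=> sim; rewrite -{2}[g]mulg1.
by apply: (tsim_Node (1, 1)) => [|j]; [apply: Gam1 | rewrite perm1; apply: sim].
Qed.

Lemma tsim_refl t : tsim t t.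
Proof. by elim: t => [j | i g p ts IHts]; [apply: tsim_Leaf | apply: tsim_Node1]. Qed.

Lemma tsim_sym t u : tsim t u -> tsim u t.
Proof.
elim=> [j | i g p p' ts us c cG _ IH]; first exact: tsim_Leaf.
rewrite -{2}(mulgK c.1 g); apply: (tsim_Node (c.1^-1, c.2^-1)) => [|j].
  exact: GamV.
by have := IH (c.2^-1 j); rewrite permKV.
Qed.

Lemma tsim_trans t u v : tsim t u -> tsim u v -> tsim t v.
Proof.
move=> sim_tu; elim: sim_tu v => [j | i g p p' ts us c cG _ IH] v /tsim_inv //.
case=> d dG [p'' [vs [-> sim_uv]]]; rewrite -mulgA.
apply: (tsim_Node (c.1 * d.1, c.2 * d.2)) => [|j]; first exact: GamM.
by rewrite permM; apply: IH; apply: sim_uv.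
Qed.

Lemma teq_tsim t u : teq Gam t u -> tsim t u.
Proof.
elim=> {t u} [t | t u _ | t u v _ sim_tu _ | i g p ts us _ IH | i g p ts c cG | i g p q ts].
- exact: tsim_refl.
- exact: tsim_sym.
- exact: tsim_trans.
- by apply: tsim_Node1 => j; apply: IH.
- by apply: (tsim_Node c) => // j; rewrite invMg permM permK; apply: tsim_refl.
- by apply: tsim_Node1 => j; rewrite invMg permM; apply: tsim_refl.
Qed.

Lemma tsim_leaves t u : tsim t u -> perm_eq (leaves t) (leaves u).
Proof.
elim=> [j | i g p p' ts us c cG _ IH] //=.
have ts_p := perm_flatten_reindex (fun j => leaves (ts j)) p^-1.
have us_cp' := perm_flatten_reindex (fun j => leaves (us j)) (c.2 * p'^-1).
rewrite perm_sym in ts_p; apply: perm_trans ts_p (perm_trans _ us_cp').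
by elim: (enum _) => //= j s IHs; rewrite permM; apply: perm_cat (IH j) IHs.
Qed.

Lemma tsim_leafset t u : tsim t u -> leafset t = leafset u.
Proof. by move/tsim_leaves => eq_tu; apply/setP => y; rewrite !inE (perm_mem eq_tu). Qed.

Lemma tsim_NodeE i g a (p : {perm 'I_(ar i)}) (ts us : 'I_(ar i) -> tree) :
  tsim (Node i a p us) (Node i g p ts) ->
  exists2 c, c \in Gam i & g = a * c.1 /\ forall j, tsim (us (p^-1 j)) (ts (p^-1 (c.2 j))).
Proof.
move/tsim_inv => [c cG [p' [ts' [[eg ep ets] sim]]]].
exists c => //; split=> //.
by move: sim; rewrite -(inj_pair2 _ _ _ _ _ ets) -(inj_pair2 _ _ _ _ _ ep).
Qed.

End TreeSimilarity.

Section Generators.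
Variables (gT : finGroupType) (F : hfamily gT) (O : orderings gT).
Hypothesis IS : indexing_system F.
Hypothesis O_ordering : forall H K : {group gT}, K \proper H -> orbit_in F H K ->
  is_orbit_ordering H K (projT2 (O H K)).

Definition gen_dom (x : gen gT) : {group gT} :=
  if x is GExp H _ then H else [set: gT]%G.

Definition gen_perm (x : gen gT) (a : gT) : {perm 'I_(ar_gen O x)} :=
  match x as x return {perm 'I_(ar_gen O x)} with
  | GExp H K => projT2 (O H K) a
  | _ => 1
  end.

Lemma Gam_genP x (c : gT * {perm 'I_(ar_gen O x)}) :
  c \in Gam_gen O x <-> c.1 \in gen_dom x /\ c.2 = gen_perm x c.1.
Proof.
case: x c => [||H K] [a p] /=.
all: by split=> [/imsetP[b bH [-> ->]] | [aH ->]]; [rewrite ?in_setT | apply/imsetP; exists a].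
Qed.

Lemma gen_perm_morphic x : gen_ok F x -> morphic (gen_dom x) (gen_perm x).
Proof.
case: x => [||H K] /=; try by move=> _; apply/morphicP => a b _ _; rewrite mulg1.
by case=> pKH oK; case: (O_ordering pKH oK).
Qed.

Lemma GamON_1 (i : genON F) : (1, 1) \in GamON O i.
Proof.
case: i => x ok; apply/Gam_genP; split; first exact: group1.
by rewrite (fmorph1 (gen_perm_morphic ok)).
Qed.

Lemma GamON_V (i : genON F) c : c \in GamON O i -> (c.1^-1, c.2^-1) \in GamON O i.
Proof.
case: i c => x ok c /Gam_genP[c1 ->]; apply/Gam_genP; split; first by rewrite groupV.
by rewrite (fmorphV (gen_perm_morphic ok)).
Qed.

Lemma GamON_M (i : genON F) c d : c \in GamON O i -> d \in GamON O i ->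
  (c.1 * d.1, c.2 * d.2) \in GamON O i.
Proof.
case: i c d => x ok c d /Gam_genP[c1 ->] /Gam_genP[d1 ->].
by apply/Gam_genP; split; [rewrite groupM | rewrite (fmorphM (gen_perm_morphic ok))].
Qed.

Lemma F_reorder_orbit (H K : {group gT}) m1 m2
    (f1 : gT -> {perm 'I_m1}) (f2 : gT -> {perm 'I_m2}) :
  is_orbit_ordering H K f1 -> is_orbit_ordering H K f2 -> @F H m1 f1 -> @F H m2 f2.
Proof.
case=> _ [e1 [e1_inj _ e1_onto e1_eq]] [f2M [e2 [e2_inj e2_coset _ e2_eq]]].
have ex j : exists i, e1 i == e2 j.
  by have [i ei] := e1_onto _ (e2_coset j); exists i; rewrite ei.
pose e j := xchoose (ex j); have eE j : e1 (e j) = e2 j by apply/eqP/(xchooseP (ex j)).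
apply: (is_sub IS (e := e) f2M).
- by move=> j j' /(congr1 e1); rewrite !eE => /e2_inj.
- by move=> h j hH; apply: e1_inj; rewrite e1_eq // !eE e2_eq.
Qed.

Lemma conj_gen_perm_morphic x (K : {group gT}) g : gen_ok F x ->
  {in K, forall h, h ^ g \in gen_dom x} -> morphic K (fun h => gen_perm x (h ^ g)).
Proof.
move=> ok dK; apply/morphicP => a b aK bK.
by rewrite conjMg (fmorphM (gen_perm_morphic ok)) ?dK.
Qed.

Lemma conj_gen_perm_F x (K : {group gT}) g : gen_ok F x ->
  {in K, forall h, h ^ g \in gen_dom x} -> @F K _ (fun h => gen_perm x (h ^ g)).
Proof.
move=> ok dK; have KM := conj_gen_perm_morphic ok dK.
case: x ok dK KM => [_ _ KM | _ _ KM | H' K' [pK'H' oK'] /= dK KM];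
  try exact: is_trivial IS K _.
have [m0 [f0 [ord0 F0]]] := oK'.
have FH' := F_reorder_orbit ord0 (O_ordering pK'H' oK') F0.
have sK : K \subset (H' :^ g^-1)%G.
  by apply/subsetP => h hK; rewrite /= mem_conjgV dK.
apply: (is_sub IS (e := id) KM _ _ (is_res IS sK (is_conj IS g^-1 FH'))) => // h i hK /=.
by rewrite invgK /conjg mulgA.
Qed.

End Generators.

Section NodeStep.
Variables (gT : finGroupType) (F : hfamily gT).
Hypothesis IS : indexing_system F.
Variables (n : nat) (f : gT -> {perm 'I_n}) (K : {group gT}).
Variables (k : nat) (pi : gT -> {perm 'I_k}) (L : 'I_k -> {set 'I_n}).
Hypotheses (fM : morphic K f) (piM : morphic K pi) (F_pi : @F K k pi).
Hypothesis F_L : forall j, F_on F f (stab pi K j) (L j).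
Hypothesis L_act : forall h j, h \in K -> L (pi h j) = f h @: L j.
Hypothesis L_disjoint : forall j j', j != j' -> [disjoint L j & L j'].

Lemma L_actf h j y : h \in K -> y \in L j -> f h y \in L (pi h j).
Proof. by move=> hK yL; rewrite L_act // imset_f. Qed.

Lemma bigcup_L_stable (S : {set 'I_k}) : stable pi K S -> stable f K (\bigcup_(j in S) L j).
Proof.
move=> sS h y hK /bigcupP[j jS yL]; apply/bigcupP; exists (pi h j); first exact: sS.
exact: L_actf.
Qed.

Lemma F_on_bigcup_orbit j : F_on F f K (\bigcup_(j' in orb pi K j) L j').
Proof.
have oK : orbit_in F K (stab pi K j).
  by apply: (orbit_in_stab IS piM (stableT pi K) (in_setT j)); apply/(F_onT IS piM).
have sO := bigcup_L_stable (orb_stable piM (x := j)).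
apply: (F_on_ind IS fM (stab_sub piM j) oK sO _ _ (F_L j)).
- move=> h y; rewrite (mem_stab piM) => /andP[hK /eqP hj] yL.
  by rewrite -hj L_actf.
- by apply: bigcup_sup; apply: (orb_refl piM).
- move=> y /bigcupP[_ /imsetP[h hK ->]]; rewrite L_act // => /imsetP[b bL ->].
  by exists h, b.
- move=> h h' b b' hK h'K bL b'L e.
  have pij : pi h j = pi h' j.
    apply/eqP; apply: contraT => /L_disjoint /disjointFr /(_ (L_actf hK bL)).
    by rewrite e L_actf.
  exists (h' * h^-1); last split.
  + rewrite (mem_stab piM) groupM ?groupV //= (fmorphM piM) ?groupV //.
    by rewrite permM -pij (fmorphVK piM).
  + by rewrite (fmorphM fM) ?groupV // permM -e (fmorphVK fM).
  + by rewrite mulgKV.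
Qed.

Lemma F_on_bigcup (S : {set 'I_k}) : stable pi K S -> F_on F f K (\bigcup_(j in S) L j).
Proof.
move: S; apply: (stable_set_ind piM) => [|S j sS jS F_rest].
  by rewrite big_set0; apply: F_on0.
set Oj := orb pi K j; have sOj : stable pi K Oj := orb_stable piM (x := j).
have -> : S = Oj :|: (S :\: Oj) by rewrite -{1}(setID S Oj) (setIidPr (orb_sub sS jS)).
have sSOj := stable_setD piM sS sOj.
rewrite bigcup_setU.
apply: (F_onU IS fM) (bigcup_L_stable sOj) (bigcup_L_stable sSOj) _ _ F_rest.
- apply: bigcup_disjoint => j2; rewrite inE => /andP[j2O _].
  rewrite disjoint_sym; apply: bigcup_disjoint => j1 j1O; rewrite disjoint_sym.
  by apply: L_disjoint; apply: contraNneq j2O => <-.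
- exact: F_on_bigcup_orbit.
Qed.

End NodeStep.

Section AdmissibleToF.
Variables (gT : finGroupType) (F : hfamily gT) (O : orderings gT).
Hypothesis IS : indexing_system F.
Hypothesis O_ordering : forall H K : {group gT}, K \proper H -> orbit_in F H K ->
  is_orbit_ordering H K (projT2 (O H K)).
Variables (n : nat) (f : gT -> {perm 'I_n}).
Local Notation GamF := (@GamON gT F O).

Lemma F_on_leafset (t : tree gT (@arON gT F O) n) (K : {group gT}) :
    morphic K f -> uniq (leaves t) ->
    (forall h, h \in K -> tsim GamF (tact h (f h) t) t) ->
  F_on F f K (leafset t).
Proof.
elim: t K => [a | [x ok] g p ts IHts] K fM uniq_t fixed.
  rewrite (_ : leafset _ = [set a]); last by apply/setP => y; rewrite !inE.
  by apply: (F_on1 IS fM) => h /fixed /tsim_inv [/esym].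
pose pi h := gen_perm O x (h ^ g).
have fixed_children h : h \in K -> h ^ g \in gen_dom x /\
    forall j, tsim GamF (tact h (f h) (ts (p^-1 j))) (ts (p^-1 (pi h j))).
  move=> /fixed /= fixed_h; have [c /Gam_genP [cdom ->] [eg sim]] := tsim_NodeE fixed_h.
  (* [h] moves the root label [g] to [h^-1 * g], so the isotropy element is [h ^ g]. *)
  suff ec : c.1 = h ^ g by rewrite /pi -ec.
  by apply: (mulgI (h^-1 * g)); rewrite -eg /conjg !mulgA mulgK mulVg mul1g.
have dom_conj : {in K, forall h, h ^ g \in gen_dom x} by move=> h /fixed_children [].
have piM : morphic K pi := conj_gen_perm_morphic O_ordering ok dom_conj.
have F_pi := conj_gen_perm_F IS O_ordering ok dom_conj.
pose L j := leafset (ts (p^-1 j)).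
have F_L j : F_on F f (stab pi K j) (L j).
  apply: IHts (morphic_sub fM (stab_sub piM j)) (uniq_leaves_child _ uniq_t) _.
  move=> h; rewrite (mem_stab piM) => /andP[hK /eqP hj].
  by have [_ /(_ j)] := fixed_children h hK; rewrite hj.
have L_act h j : h \in K -> L (pi h j) = f h @: L j.
  move=> hK; have [_ /(_ j) /tsim_leafset eq_L] := fixed_children h hK.
  by rewrite /L -eq_L leafset_tact.
have L_disjoint j j' : j != j' -> [disjoint L j & L j'].
  by move=> ne_jj'; apply: (leafset_children_disjoint uniq_t); rewrite (inj_eq perm_inj).
have := F_on_bigcup IS fM piM F_pi F_L L_act L_disjoint (stableT pi K).
by rewrite (leafset_Node _ _ _ p^-1); under eq_bigl do rewrite in_setT.
Qed.

End AdmissibleToF.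

Lemma orbit_ordering_embedding (gT : finGroupType) (K : {group gT}) n
    (f : gT -> {perm 'I_n}) m (fO : gT -> {perm 'I_m}) x :
    morphic K f -> is_orbit_ordering K (stab f K x) fO ->
  exists iota : 'I_m -> 'I_n, [/\ injective iota, orb f K x =i codom iota &
    forall h j, h \in K -> iota (fO h j) = f h (iota j)].
Proof.
move=> fM [_ [e [e_inj e_coset e_onto e_eq]]].
have e_rcoset j : exists2 y, y \in K & e j = stab f K x :* y by apply/rcosetsP.
pose iota j := f (repr (e j)) x; exists iota.
have iotaE j y : y \in K -> e j = stab f K x :* y -> iota j = f y x.
  move=> yK ey; rewrite /iota ey; have /rcosetP[k kstab ->] := mem_repr_rcoset (stab f K x) y.
  move: kstab; rewrite (mem_stab fM) => /andP[kK /eqP kx].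
  by rewrite (fmorphM fM) // permM kx.
split.
- move=> j1 j2; have [y1 y1K e1] := e_rcoset j1; have [y2 y2K e2] := e_rcoset j2.
  rewrite (iotaE _ _ y1K e1) (iotaE _ _ y2K e2) => e12; apply: e_inj.
  by rewrite e1 e2 -!(stab_rcoset fM) // e12.
- move=> y; apply/imsetP/codomP => [[z zK ->] | [j ->]].
    have [j ej] : exists j, e j = stab f K x :* z by apply: e_onto; apply/rcosetsP; exists z.
    by exists j; rewrite (iotaE _ _ zK ej).
  by have [z zK ez] := e_rcoset j; exists z; rewrite // (iotaE _ _ zK ez).
- move=> h j hK; have [y yK ey] := e_rcoset j.
  rewrite (iotaE _ _ yK ey) (iotaE _ (y * h)) ?groupM ?e_eq // ?ey ?rcosetM //.
  by rewrite (fmorphM fM) // permM.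
Qed.

Section FToAdmissible.
Variables (gT : finGroupType) (F : hfamily gT) (O : orderings gT).
Hypothesis IS : indexing_system F.
Hypothesis O_ordering : forall H K : {group gT}, K \proper H -> orbit_in F H K ->
  is_orbit_ordering H K (projT2 (O H K)).
Variables (H : {group gT}) (n : nat) (f : gT -> {perm 'I_n}).
Hypothesis fM : morphic H f.
Local Notation tree := (tree gT (@arON gT F O) n).
Local Notation GamF := (@GamON gT F O).

Definition fixed_tree (t : tree) := forall h, h \in H -> teq GamF (tact h (f h) t) t.

Definition spans (t : tree) (A : {set 'I_n}) := perm_eq (leaves t) (enum A).

Definition gNull : genON F := exist _ GNull I.
Definition gMul : genON F := exist _ GMul I.

Lemma ord0_False (j : 'I_0) : False. Proof. by case: j. Qed.

Definition tnull : tree := Node gNull 1 1 (fun j => False_rect _ (ord0_False j)).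

Definition tmul (t1 t2 : tree) : tree :=
  Node gMul 1 1 (fun j => if val j == 0 then t1 else t2).

Lemma tnull_spans : spans tnull set0.
Proof. by rewrite /spans enum_set0 /=; case: (enum _) => // j; case: (ord0_False j). Qed.

Lemma tnull_fixed : fixed_tree tnull.
Proof.
move=> h _; apply: (teq_tact_node (c := 1)) => [|j]; last by case: (ord0_False j).
by apply/imsetP; exists h.
Qed.

Lemma leaves_tmul t1 t2 : leaves (tmul t1 t2) = leaves t1 ++ leaves t2.
Proof.
rewrite /= (map_comp (fun m : nat => leaves (if m == 0 then t1 else t2)) val).
by rewrite val_enum_ord /= cats0.
Qed.

Lemma tmul_spans t1 t2 A B : spans t1 A -> spans t2 B -> [disjoint A & B] ->
  spans (tmul t1 t2) (A :|: B).
Proof.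
move=> span1 span2 dAB; rewrite /spans leaves_tmul; apply: uniq_perm; rewrite ?enum_uniq //.
  rewrite cat_uniq (perm_uniq span1) (perm_uniq span2) !enum_uniq /= andbT.
  apply/hasPn => y; rewrite (perm_mem span2) (perm_mem span1) !mem_enum.
  by move/(disjointFl dAB) ->.
by move=> y; rewrite mem_cat (perm_mem span1) (perm_mem span2) !mem_enum inE.
Qed.

Lemma tmul_fixed t1 t2 : fixed_tree t1 -> fixed_tree t2 -> fixed_tree (tmul t1 t2).
Proof.
move=> fixed1 fixed2 h hH; apply: (teq_tact_node (c := 1)) => [|j].
  by apply/imsetP; exists h.
by rewrite perm1; case: ifP => _; [apply: fixed1 | apply: fixed2].
Qed.

Lemma orbit_tree x : orbit_in F H (stab f H x) ->
  exists2 t, spans t (orb f H x) & fixed_tree t.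
Proof.
move=> oHx; have [pHx | ] := boolP (stab f H x \proper H); last first.
  (* O(F) has no generator for the trivial orbit: [x] is a fixed point, i.e. a leaf. *)
  rewrite properE (stab_sub fM) /= negbK => sHstab.
  have fx h : h \in H -> f h x = x.
    by move/(subsetP sHstab); rewrite (mem_stab fM) => /andP[_ /eqP].
  have -> : orb f H x = [set x].
    apply/setP => y; apply/imsetP/set1P => [[h hH ->] | ->]; first exact: fx.
    by exists 1; rewrite ?group1 // (fmorph1 fM) perm1.
  by exists (Leaf x); rewrite /spans ?enum_set1 // => h hH /=; rewrite fx //; apply: teq_refl.
have [iota [iota_inj iota_orb iota_eq]] := orbit_ordering_embedding fM (O_ordering pHx oHx).
pose iE : genON F := exist _ (GExp H (stab f H x)) (conj pHx oHx).
exists (Node iE 1 1 (fun j => Leaf (iota j))).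
  rewrite /spans /= flatten_map1.
  apply: uniq_perm; rewrite ?(map_inj_uniq iota_inj) ?enum_uniq //.
  by move=> y; rewrite mem_enum iota_orb codomE.
move=> h hH; apply: (teq_tact_node (i := iE) (c := projT2 (O H (stab f H x)) h)) => [|j].
  by apply/imsetP; exists h.
by rewrite /= -iota_eq //; apply: teq_refl.
Qed.

Lemma tree_of_F_on A : stable f H A -> F_on F f H A -> exists2 t, spans t A & fixed_tree t.
Proof.
move: A; apply: (stable_set_ind fM) => [_ | A x sA xA IH FA].
  by exists tnull; [apply: tnull_spans | apply: tnull_fixed].
have sAOx := stable_setD fM sA (orb_stable fM (x := x)).
have [t1 span1 fixed1] := orbit_tree (orbit_in_stab IS fM sA xA FA).
have [t2 span2 fixed2] := IH (F_on_sub IS fM sA sAOx (subsetDl _ _) FA).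
exists (tmul t1 t2); last exact: tmul_fixed.
rewrite -(setID A (orb f H x)) (setIidPr (orb_sub sA xA)).
by apply: tmul_spans span1 span2 _; rewrite disjoint_sym disjoints_subset subsetDr.
Qed.

End FToAdmissible.

Local Close Scope group_scope.

Theorem proposition4p9 (gT : finGroupType) (F : hfamily gT) (O : orderings gT) :
  indexing_system F ->
  (forall H K : {group gT}, K \proper H -> orbit_in F H K ->
     is_orbit_ordering H K (projT2 (O H K))) ->
  forall (H : {group gT}) (n : nat) (f : gT -> {perm 'I_n}),
    morphic H f -> (admissible_SM F O H f <-> F H n f).
Proof.
move=> IS O_ordering H n f fM; split.
- case=> t [wf fixed]; apply/(F_onT IS fM); rewrite -(wf_tree_leafset wf).
  apply: (F_on_leafset IS O_ordering fM); first by rewrite (perm_uniq wf) enum_uniq.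
  move=> h /fixed; apply: teq_tsim;
    [exact: GamON_1 O_ordering | exact: GamON_V O_ordering | exact: GamON_M O_ordering].
- move=> /(F_onT IS fM) FT.
  have [t span fixed] := tree_of_F_on IS O_ordering fM (stableT f H) FT.
  by exists t; split=> //; move: span; rewrite /spans enum_setT -enumT.
Qed.
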